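(* Let $(\mathcal V,\mathcal W,\lambda)$ be a FTvN system with center $C$, and let $D:\mathcal V\to\mathcal V$ be a doubly stochastic transformation that has an adjoint $D^*$. Then: (a) For every convex spectral set $K$, $D(K)\subseteq K$. (b) For every $u\in C$, $Du=u$ and $D^*u=u$. In particular, if $e$ is a unit element of the system, then $De=e$ and $D^*e=e$. (c) If $\mathcal V$ is finite dimensional, then $D^*x\prec x$ for all $x\in\mathcal V$.
   Context: A Fan-Theobald-von Neumann (FTvN) system is a triple $(\mathcal V,\mathcal W,\lambda)$ where $\mathcal V,\mathcal W$ are real inner product spaces and $\lambda:\mathcal V\to\mathcal W$ is a map such that: (A1) $\|\lambda(x)\|=\|x\|$ for all $x$; (A2) $\langle x,y\rangle\le\langle\lambda(x),\lambda(y)\rangle$ for all $x,y$; (A3) for every $c\in\mathcal V$ and $q\in\lambda(\mathcal V)$ there exists $x$ with $\lambda(x)=q$ and $\langle c,x\rangle=\langle\lambda(c),\lambda(x)\rangle$. The $\lambda$-orbit of $u$ is $[u]=\{z:\lambda(z)=\lambda(u)\}$; a set $E$ is spectral if $x\in E\Rightarrow [x]\subseteq E$. Majorization: $x\prec y$ iff $x\in\operatorname{conv}[y]$. A linear map $D:\mathcal V\to\mathcal V$ is doubly stochastic if $Dx\prec x$ for all $x\in\mathcal V$. The adjoint $D^*$ satisfies $\langle D^*x,y\rangle=\langle x,Dy\rangle$ for all $x,y$. Elements $x,y$ commute if $\langle x,y\rangle=\langle\lambda(x),\lambda(y)\rangle$; the center $C$ is the set of elements commuting with all of $\mathcal V$;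 a unit element is a nonzero $e$ with $C=\mathbb R e$. *)

From HB Require Import structures.
From mathcomp Require Import all_boot all_order all_algebra.
From mathcomp Require Import reals.
Set Implicit Arguments. Unset Strict Implicit. Unset Printing Implicit Defensive.
Import Order.TTheory GRing.Theory Num.Theory.
Local Open Scope ring_scope.

Record inner_product (R : realType) (V : lmodType R) := InnerProduct {
  ip :> V -> V -> R;
  ip_sym : forall x y, ip x y = ip y x;
  ip_linl : forall (a : R) (x y z : V), ip (a *: x + y) z = a * ip x z + ip y z;
  ip_ge0 : forall x, 0 <= ip x x;
  ip_eq0 : forall x, ip x x = 0 -> x = 0
}.

Definition ipnorm (R : realType) (V : lmodType R) (ipV : inner_product V) (x : V) : R :=
  Num.sqrt (ipV x x).

Section FTvN.
Variables (R : realType) (V W : lmodType R).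
Variables (ipV : inner_product V) (ipW : inner_product W) (lam : V -> W).

(* Fan-Theobald-von Neumann system axioms (A1)-(A3). *)
Definition FTvN_system : Prop :=
  (forall x, ipnorm ipW (lam x) = ipnorm ipV x) /\
  (forall x y, ipV x y <= ipW (lam x) (lam y)) /\
  (forall (c : V) (q : W), (exists v, lam v = q) ->
     exists x, lam x = q /\ ipV c x = ipW (lam c) (lam x)).

Definition orbit (u : V) : V -> Prop := fun z => lam z = lam u.

Definition spectral (E : V -> Prop) : Prop :=
  forall x, E x -> forall z, orbit x z -> E z.

Definition conv (E : V -> Prop) : V -> Prop := fun x =>
  exists (n : nat) (w : 'I_n -> R) (p : 'I_n -> V),
    (forall i, 0 <= w i) /\ \sum_i w i = 1 /\ (forall i, E (p i)) /\
    x = \sum_i w i *: p i.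

Definition convex (K : V -> Prop) : Prop :=
  forall x y (t : R), K x -> K y -> 0 <= t -> t <= 1 -> K (t *: x + (1 - t) *: y).

Definition majorized (x y : V) : Prop := conv (orbit y) x.

Definition doubly_stochastic (D : V -> V) : Prop :=
  forall x, majorized (D x) x.

Definition is_adjoint (D Dstar : V -> V) : Prop :=
  forall x y, ipV (Dstar x) y = ipV x (D y).

Definition commute (x y : V) : Prop := ipV x y = ipW (lam x) (lam y).

Definition center (u : V) : Prop := forall x, commute u x.

Definition unit_element (e : V) : Prop :=
  e <> 0 /\ (forall u, center u <-> exists t : R, u = t *: e).

End FTvN.

Definition finite_dimensional (R : realType) (V : lmodType R) : Prop :=
  exists (n : nat) (b : 'I_n -> V), forall x : V,
    exists c : 'I_n -> R, x = \sum_i c i *: b i.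

(* By (A2), <c, D* x> = <D c, x> <= <lambda c, lambda x> for every c, since D c lies in
   conv [c].  In finite dimension this inequality forces y := D* x into conv [x].  Let z be
   the point of conv [x] nearest to y (it exists: [x] is compact because lambda is
   1-Lipschitz, and by Caratheodory conv [x] is a continuous image of a compact set) and put
   c = y - z.  Choosing by (A3) an s in [x] with <c, s> = <lambda c, lambda x>, the
   variational inequality <c, s - z> <= 0 gives |c|^2 = <c, y> - <c, z> <= <c, s> - <c, z> <= 0.
   For (a), D x lies in conv [x], which a convex spectral set containing x contains; for (b),
   [u] = {u} and <., u> is constant on conv [x] when u is central. *)

From HB Require Import structures.
From mathcomp Require Import all_boot all_order all_algebra.
From mathcomp Require Import reals.
From mathcomp Require Import boolp classical_sets topology normedtype matrix_normedtype derive.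
From mathcomp Require Import lra.
Import Order.TTheory GRing.Theory Num.Theory numFieldTopology.Exports numFieldNormedType.Exports.
Local Open Scope ring_scope.
Set Implicit Arguments. Unset Strict Implicit.

Definition ocons T m (x : T) (f : 'I_m -> T) (i : 'I_m.+1) : T :=
  if unlift ord0 i is Some j then f j else x.

Lemma ocons0 T m (x : T) (f : 'I_m -> T) : ocons x f ord0 = x.
Proof. by rewrite /ocons unlift_none. Qed.

Lemma ocons_lift T m (x : T) (f : 'I_m -> T) j : ocons x f (lift ord0 j) = f j.
Proof. by rewrite /ocons liftK. Qed.

Section InnerProduct.
Variables (R : realType) (V : lmodType R) (ip : inner_product V).

Lemma ipDl x y z : ip (x + y) z = ip x z + ip y z.
Proof. by have := ip_linl ip 1 x y z; rewrite scale1r mul1r. Qed.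

Lemma ip0l z : ip 0 z = 0.
Proof. by apply: (addrI (ip 0 z)); rewrite -ipDl !addr0. Qed.

Lemma ipZl a x z : ip (a *: x) z = a * ip x z.
Proof. by have := ip_linl ip a x 0 z; rewrite !addr0 ip0l addr0. Qed.

Lemma ipNl x z : ip (- x) z = - ip x z.
Proof. by rewrite -scaleN1r ipZl mulN1r. Qed.

Lemma ipBl x y z : ip (x - y) z = ip x z - ip y z.
Proof. by rewrite ipDl ipNl. Qed.

Lemma ipDr x y z : ip z (x + y) = ip z x + ip z y.
Proof. by rewrite ip_sym ipDl !(ip_sym ip z). Qed.

Lemma ipZr a x z : ip z (a *: x) = a * ip z x.
Proof. by rewrite ip_sym ipZl (ip_sym ip z). Qed.

Lemma ipNr x z : ip z (- x) = - ip z x.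
Proof. by rewrite ip_sym ipNl (ip_sym ip z). Qed.

Lemma ipBr x y z : ip z (x - y) = ip z x - ip z y.
Proof. by rewrite ipDr ipNr. Qed.

Lemma ip_suml I (r : seq I) (P : pred I) (F : I -> V) z :
  ip (\sum_(i <- r | P i) F i) z = \sum_(i <- r | P i) ip (F i) z.
Proof. exact: (big_morph (fun x => ip x z) (fun x y => ipDl x y z) (ip0l z)). Qed.

Lemma ip_injl x y : (forall z, ip x z = ip y z) -> x = y.
Proof.
move=> xy; apply/eqP; rewrite -subr_eq0; apply/eqP; apply: (@ip_eq0 _ _ ip).
by rewrite ipBl xy subrr.
Qed.

Definition sqdist x y := ip (x - y) (x - y).

Lemma nearest_ip_le0 y z s :
  (forall t, 0 < t -> t <= 1 -> sqdist y z <= sqdist y (t *: s + (1 - t) *: z)) ->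
  ip (y - z) (s - z) <= 0.
Proof.
move=> z_min; rewrite leNgt; apply/negP.
set c := y - z; set d := s - z => cd_gt0; have dd_ge0 := ip_ge0 ip d.
pose t := ip c d / (ip c d + ip d d).
have cdd_gt0 : 0 < ip c d + ip d d by rewrite ltr_wpDr.
have t_gt0 : 0 < t by rewrite divr_gt0.
have t_le1 : t <= 1 by rewrite ler_pdivrMr // mul1r lerDl.
have t_def : t * (ip c d + ip d d) = ip c d by rewrite divfK ?gt_eqF.
have := z_min t t_gt0 t_le1; rewrite /sqdist -/c.
have -> : y - (t *: s + (1 - t) *: z) = c - t *: d.
  by rewrite scalerBr scalerBl scale1r -!addrA; congr (_ + _); rewrite !opprD !opprK addrCA.
by clearbody c d; rewrite !(ipBl, ipBr, ipZl, ipZr) (ip_sym ip d); nra.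
Qed.

Definition orthonormal m (e : 'I_m -> V) := forall i j, ip (e i) (e j) = (i == j)%:R.

Definition oproj m (e : 'I_m -> V) v := \sum_j ip v (e j) *: e j.

Definition expands m (e : 'I_m -> V) v := v = oproj e v.

Section Orthonormal.
Variables (m : nat) (e : 'I_m -> V).
Hypothesis e_on : orthonormal e.

Lemma ip_ortho_coord (c : 'I_m -> R) k : ip (\sum_j c j *: e j) (e k) = c k.
Proof.
rewrite ip_suml (bigD1 k) //= ipZl e_on eqxx mulr1 big1 ?addr0 // => j /negbTE jk.
by rewrite ipZl e_on jk mulr0.
Qed.

Lemma ip_oproj_sub v k : ip (v - oproj e v) (e k) = 0.
Proof. by rewrite ipBl ip_ortho_coord subrr. Qed.

Lemma expands_oproj v : expands e (oproj e v).
Proof. by rewrite /expands {2}/oproj; under eq_bigr do rewrite ip_ortho_coord. Qed.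

End Orthonormal.

Lemma parseval m (e : 'I_m -> V) u v : expands e u ->
  ip u v = \sum_j ip u (e j) * ip v (e j).
Proof.
move=> eu; rewrite {1}eu ip_suml; apply: eq_bigr => j _.
by rewrite ipZl (ip_sym ip (e j)).
Qed.

Lemma ip_expands_ortho m (e : 'I_m -> V) u f :
  (forall j, ip (e j) f = 0) -> expands e u -> ip u f = 0.
Proof. by move=> ef eu; rewrite eu ip_suml big1 // => j _; rewrite ipZl ef mulr0. Qed.

Lemma oproj_ocons m f (e : 'I_m -> V) v :
  oproj (ocons f e) v = ip v f *: f + oproj e v.
Proof.
by rewrite /oproj big_ord_recl ocons0; under eq_bigr do rewrite ocons_lift.
Qed.

Lemma orthonormal_ocons m f (e : 'I_m -> V) : orthonormal e -> ip f f = 1 ->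
  (forall j, ip (e j) f = 0) -> orthonormal (ocons f e).
Proof.
move=> e_on ff ef i j.
case: (unliftP ord0 i) => [i' ->|->]; case: (unliftP ord0 j) => [j' ->|->];
  rewrite ?ocons0 ?ocons_lift.
- by rewrite e_on (inj_eq (@lift_inj _ ord0)).
- by rewrite ef eq_sym (negbTE (neq_lift _ _)).
- by rewrite ip_sym ef (negbTE (neq_lift _ _)).
- by rewrite ff eqxx.
Qed.

(* Gram--Schmidt: adjoin the normalised residual [u - oproj e u] when it is nonzero. *)
Lemma gram_schmidt_step m (e : 'I_m -> V) u : orthonormal e ->
  exists m' (e' : 'I_m' -> V),
    [/\ orthonormal e', expands e' u & forall v, expands e v -> expands e' v].
Proof.
move=> e_on; set r := u - oproj e u.
have [r0|rn0] := eqVneq r 0.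
  by exists m, e; split=> //; apply/eqP; rewrite -subr_eq0 -/r r0.
have rr_gt0 : 0 < ip r r.
  by rewrite lt_def ip_ge0 andbT; apply: contra_neq rn0 => /ip_eq0.
have sq_neq0 : Num.sqrt (ip r r) != 0 by rewrite gt_eqF // sqrtr_gt0.
pose f := (Num.sqrt (ip r r))^-1 *: r.
have er j : ip (e j) r = 0 by rewrite ip_sym ip_oproj_sub.
have ef j : ip (e j) f = 0 by rewrite ipZr er mulr0.
have ff : ip f f = 1.
  by rewrite ipZl ipZr mulrA -invfM -expr2 sqr_sqrtr ?ltW // mulVf ?gt_eqF.
exists m.+1, (ocons f e); split; first exact: orthonormal_ocons.
  have ur : ip r r = ip u r.
    by rewrite {1}/r ipBl (ip_expands_ortho er (expands_oproj e_on u)) subr0.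
  rewrite /expands oproj_ocons ipZr scalerA -ur mulrAC -invfM -expr2.
  by rewrite sqr_sqrtr ?ltW // mulVf ?gt_eqF // scale1r /r subrK.
by move=> v ev; rewrite /expands oproj_ocons (ip_expands_ortho ef ev) scale0r add0r.
Qed.

Lemma gram_schmidt (s : seq V) : exists m (e : 'I_m -> V),
  orthonormal e /\ forall v, v \in s -> expands e v.
Proof.
elim: s => [|u s [m [e [e_on es]]]]; first by exists 0%N, (fun _ => 0); split => [[]|].
have [m' [e' [e'_on e'u ee']]] := gram_schmidt_step u e_on.
by exists m', e'; split=> // v; rewrite inE => /predU1P [->|/es/ee'].
Qed.

Lemma orthonormal_basis : finite_dimensional V ->
  exists m (e : 'I_m -> V), orthonormal e /\ forall v, expands e v.
Proof.
move=> [n [b bV]]; have [m [e [e_on eb]]] := gram_schmidt [seq b i | i <- enum 'I_n].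
exists m, e; split=> // v; have [c ->] := bV v.
have ebi i : expands e (b i) by apply/eb/map_f; rewrite mem_enum.
rewrite /expands /oproj; under [RHS]eq_bigr do rewrite ip_suml scaler_suml.
rewrite exchange_big /=; apply: eq_bigr => i _.
by rewrite {1}(ebi i) scaler_sumr; apply: eq_bigr => j _; rewrite ipZl scalerA.
Qed.

Lemma affine_dependence m (e : 'I_m -> V) (p : 'I_m.+2 -> V) :
  (forall i, expands e (p i)) ->
  exists mu : 'I_m.+2 -> R,
    [/\ exists i, 0 < mu i, \sum_i mu i = 0 & \sum_i mu i *: p i = 0].
Proof.
move=> ep; pose A : 'M[R]_(m.+2, m.+1) :=
  \matrix_(i, j) oapp (fun j' => ip (p i) (e j')) 1 (unlift ord0 j).
have /rowV0Pn [mu /sub_kermxP muA mu_neq0] : kermx A != 0.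
  by rewrite kermx_eq0 -row_leq_rank -ltnNge ltnS rank_leq_col.
have muA0 j : \sum_i mu 0 i * A i j = 0.
  by have := congr1 (fun M : 'rV_m.+1 => M 0 j) muA; rewrite !mxE.
have sum_mu : \sum_i mu 0 i = 0.
  by rewrite -[RHS](muA0 ord0); apply: eq_bigr => i _; rewrite mxE unlift_none mulr1.
exists (mu 0); split=> //.
- apply/existsP; apply: contraR mu_neq0; rewrite negb_exists => /forallP mu_le0.
  apply/eqP/rowP => i; rewrite mxE; apply/eqP; rewrite -oppr_eq0; apply/eqP.
  apply: (@psumr_eq0P _ _ xpredT (fun k => - mu 0 k)) => // [k _|].
    by rewrite oppr_ge0 leNgt mu_le0.
  by rewrite sumrN sum_mu oppr0.
- under eq_bigr do rewrite (ep _) /oproj scaler_sumr.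
  rewrite exchange_big big1 // => j _.
  transitivity ((\sum_i mu 0 i * A i (lift ord0 j)) *: e j); last by rewrite muA0 scale0r.
  by rewrite scaler_suml; apply: eq_bigr => i _; rewrite mxE liftK scalerA.
Qed.

(* Caratheodory: shift the weights along an affine dependence until one of them vanishes. *)
Lemma caratheodory_step m (e : 'I_m -> V) (w : 'I_m.+2 -> R) (p : 'I_m.+2 -> V) :
  (forall i, expands e (p i)) -> (forall i, 0 <= w i) -> \sum_i w i = 1 ->
  exists (w' : 'I_m.+1 -> R) (p' : 'I_m.+1 -> V),
    [/\ forall i, 0 <= w' i, \sum_i w' i = 1, forall i, exists k, p' i = p k &
      \sum_i w' i *: p' i = \sum_i w i *: p i].
Proof.
move=> ep w_ge0 w_sum1; have [mu [[i1 mu_i1] sum_mu sum_mup]] := affine_dependence ep.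
have [k mu_k k_min] := @arg_minP _ _ _ i1 (fun i => 0 < mu i) (fun i => w i / mu i) mu_i1.
pose t := w k / mu k; pose w2 i := w i - t * mu i.
have w2_ge0 i : 0 <= w2 i.
  rewrite subr_ge0; have [mu_i|mu_le0] := ltP 0 (mu i).
    by rewrite -ler_pdivlMr //; apply: k_min.
  by apply: (le_trans _ (w_ge0 i)); rewrite mulr_ge0_le0 // divr_ge0 // ltW.
have w2_k : w2 k = 0 by rewrite /w2 /t divfK ?subrr // gt_eqF.
have w2_sum1 : \sum_i w2 i = 1 by rewrite sumrB -mulr_sumr sum_mu mulr0 subr0.
have w2p : \sum_i w2 i *: p i = \sum_i w i *: p i.
  under eq_bigr do rewrite scalerBl -scalerA.
  by rewrite sumrB -scaler_sumr sum_mup scaler0 subr0.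
exists (fun i => w2 (lift k i)), (fun i => p (lift k i)); split.
- by move=> i; apply: w2_ge0.
- by move: w2_sum1; rewrite (bigD1_ord k) //= w2_k add0r.
- by move=> i; exists (lift k i).
- by rewrite -w2p (bigD1_ord k (P := xpredT)) //= w2_k scale0r add0r.
Qed.

Lemma closed_fiber_lipschitz n (f : 'rV[R]_n -> V) (v0 : V) (K : R) : 0 <= K ->
  (forall (a b : 'rV[R]_n) d, (forall k, `|a ord0 k - b ord0 k| <= d) ->
     sqdist (f a) (f b) <= K * d ^+ 2) ->
  closed [set a | f a = v0].
Proof.
move=> K_ge0 f_lip a a_cl; apply/eqP; rewrite -subr_eq0; apply/eqP; apply: (@ip_eq0 _ _ ip).
apply/eqP; rewrite eq_le ip_ge0 andbT; apply/ler_addgt0Pr => eps eps_gt0; rewrite add0r.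
pose d := Num.sqrt (eps / (K + 1)).
have K1_gt0 : 0 < K + 1 by rewrite ltr_wpDl.
have d_gt0 : 0 < d by rewrite sqrtr_gt0 divr_gt0.
have [b [fb ab]] := a_cl _ (nbhsx_ballx a d d_gt0).
rewrite -fb; apply: (le_trans (f_lip a b d _)) => [k|].
  by move: ab => [_ /(_ ord0 k)]; rewrite /ball /= => /ltW.
by rewrite sqr_sqrtr ?divr_ge0 ?ltW // mulrA ltr_pdivrMr //; lra.
Qed.

End InnerProduct.

Lemma bounded_set_rV (R : realType) n (A : set 'rV[R]_n) (r : R) :
  (forall v : 'rV[R]_n, A v -> forall k, `|v ord0 k| <= r) -> bounded_set A.
Proof.
move=> A_le; suff : \forall M \near +oo, forall v, A v -> `|v| <= M by [].
have r_real : Num.max 0 r \is Num.real by rewrite num_real.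
near=> M => v /= Av.
have rM : Num.max 0 r <= M by near: M; apply: nbhs_pinfty_ge.
move: rM; rewrite ge_max => /andP[M_ge0 rM].
rewrite [leLHS]mx_normrE; apply/bigmax_leP; split=> // -[i k] _ /=.
by rewrite (ord1 i); apply: le_trans (A_le _ Av k) rM.
Unshelve. all: by end_near.
Qed.

Section Convexity.
Variables (R : realType) (V : lmodType R).

Lemma convex_sum (K : V -> Prop) n (w : 'I_n -> R) (p : 'I_n -> V) : convex K ->
  (forall i, 0 <= w i) -> \sum_i w i = 1 -> (forall i, K (p i)) -> K (\sum_i w i *: p i).
Proof.
move=> K_cvx; elim: n w p => [|n IH] w p w_ge0 w_sum1 Kp.
  by move: w_sum1; rewrite big_ord0 => /eqP; rewrite eq_sym oner_eq0.
move: w_sum1; rewrite !big_ord_recl; set s := \sum_(i < n) _ => w_sum1.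
have w0 : w ord0 = 1 - s by rewrite -w_sum1 addrK.
have s_ge0 : 0 <= s by apply: sumr_ge0.
have [s0|s_neq0] := eqVneq s 0.
  rewrite big1 => [|i _]; first by rewrite addr0 w0 s0 subr0 scale1r.
  by rewrite (@psumr_eq0P _ _ xpredT (fun i => w (lift ord0 i))) ?scale0r.
have K_rest : K (\sum_i (w (lift ord0 i) / s) *: p (lift ord0 i)).
  apply: IH => // [i|]; first by rewrite divr_ge0.
  by rewrite -mulr_suml mulfV.
have -> : \sum_i w (lift ord0 i) *: p (lift ord0 i) =
    (1 - w ord0) *: \sum_i (w (lift ord0 i) / s) *: p (lift ord0 i).
  rewrite w0 subKr scaler_sumr; apply: eq_bigr => i _.
  by rewrite scalerA mulrC divfK.
by apply: K_cvx => //; rewrite w0; lra.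
Qed.

Lemma conv_sub_convex (K E : V -> Prop) : convex K -> (forall v, E v -> K v) ->
  forall v, conv E v -> K v.
Proof.
move=> K_cvx EK v [n [w [p [w_ge0 [w_sum1 [Ep ->]]]]]].
by apply: convex_sum => // i; apply/EK.
Qed.

Lemma convex_ip_le (ip : inner_product V) a M : convex (fun v => ip v a <= M).
Proof. by move=> x y t xM yM t_ge0 t_le1; rewrite ipDl !ipZl; nra. Qed.

Lemma convex_ip_eq (ip : inner_product V) a M : convex (fun v => ip v a = M).
Proof. by move=> x y t xM yM _ _; rewrite ipDl !ipZl xM yM -mulrDl subrKC mul1r. Qed.

Lemma convex_set1 (u : V) : convex (fun v => v = u).
Proof. by move=> x y t -> -> _ _; rewrite -scalerDl subrKC scale1r. Qed.

End Convexity.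

Section Coding.
Variables (R : realType) (V : lmodType R) (ip : inner_product V) (m : nat) (e : 'I_m -> V).
Local Notation code := 'rV[R]_(m.+1 * m.+1).

(* A code stores a convex combination of m+1 points: entry (i, 0) is the i-th weight and
   entry (i, 1 + j) the j-th coordinate of the i-th point along the family [e]. *)
Definition code_weight (v : code) i := v ord0 (mxvec_index i ord0).

Definition code_point (v : code) i := \sum_j v ord0 (mxvec_index i (lift ord0 j)) *: e j.

Definition code_comb (v : code) := \sum_i code_weight v i *: code_point v i.

Definition encode (w : 'I_m.+1 -> R) (p : 'I_m.+1 -> V) : code :=
  mxvec (\matrix_(i, j) oapp (fun j' => ip (p i) (e j')) (w i) (unlift ord0 j)).

Lemma code_weight_encode w p i : code_weight (encode w p) i = w i.
Proof. by rewrite /code_weight mxvecE mxE unlift_none. Qed.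

Lemma code_point_encode w p i : expands ip e (p i) -> code_point (encode w p) i = p i.
Proof. by move=> ep; rewrite [RHS]ep; apply: eq_bigr => j _; rewrite mxvecE mxE liftK. Qed.

Hypothesis e_on : orthonormal ip e.

Lemma ip_code_point v i j :
  ip (code_point v i) (e j) = v ord0 (mxvec_index i (lift ord0 j)).
Proof. exact: ip_ortho_coord. Qed.

Hypothesis e_basis : forall v, expands ip e v.

Lemma continuous_sqdist_code_comb y : continuous (fun v => sqdist ip y (code_comb v)).
Proof.
pose c (v : code) j :=
  ip y (e j) - \sum_i code_weight v i * v ord0 (mxvec_index i (lift ord0 j)).
have -> : (fun v => sqdist ip y (code_comb v)) = fun v => \sum_j c v j * c v j.
  apply/funext => v; rewrite /sqdist (parseval _ (e_basis _)); apply: eq_bigr => j _.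
  suff -> : ip (y - code_comb v) (e j) = c v j by [].
  rewrite ipBl /code_comb ip_suml; congr (_ - _); apply: eq_bigr => i _.
  by rewrite ipZl ip_code_point.
have coord_cont k : continuous (fun v : code => v ord0 k) by apply: coord_continuous.
have c_cont j : continuous (c^~ j).
  move=> v; apply: continuousB; first exact: cst_continuous.
  apply: (continuous_big add_continuous) => i _ {}v.
  exact: (continuousM (coord_cont _ v) (coord_cont _ v)).
apply: (continuous_big add_continuous) => j _ v.
exact: (continuousM (c_cont j v) (c_cont j v)).
Qed.

End Coding.

Section FTvN.
Variables (R : realType) (V W : lmodType R).
Variables (ipV : inner_product V) (ipW : inner_product W) (lam : V -> W).
Hypothesis hF : FTvN_system ipV ipW lam.

Lemma ip_lam_diag x : ipW (lam x) (lam x) = ipV x x.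
Proof.
have [lam_norm _] := hF; have := lam_norm x; rewrite /ipnorm => h.
by rewrite -(sqr_sqrtr (ip_ge0 ipW _)) h sqr_sqrtr // ip_ge0.
Qed.

Lemma sqdist_lam_le a b : sqdist ipW (lam a) (lam b) <= sqdist ipV a b.
Proof.
have [_ [lam_ip _]] := hF; have := lam_ip a b.
rewrite /sqdist !(ipBl, ipBr) !ip_lam_diag (ip_sym ipW (lam b)) (ip_sym ipV b); lra.
Qed.

Lemma center_orbit u z : center ipV ipW lam u -> orbit lam u z -> z = u.
Proof.
move=> u_c zu; apply/eqP; rewrite -subr_eq0; apply/eqP; apply: (@ip_eq0 _ _ ipV).
have zz : ipV z z = ipV u u by rewrite -ip_lam_diag zu ip_lam_diag.
have uz : ipV u z = ipV u u by rewrite u_c zu ip_lam_diag.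
by rewrite !(ipBl, ipBr) zz (ip_sym ipV z) uz !subrr.
Qed.

Lemma ip_majorized_le x y c : majorized lam y x -> ipV y c <= ipW (lam x) (lam c).
Proof.
move=> yx; apply: (conv_sub_convex (@convex_ip_le _ _ ipV c _) _ yx) => p px.
by have [_ [lam_ip _]] := hF; rewrite -px; apply: lam_ip.
Qed.

Lemma ip_center_majorized u x y : center ipV ipW lam u -> majorized lam y x ->
  ipV y u = ipV x u.
Proof.
move=> u_c yx; apply: (conv_sub_convex (@convex_ip_eq _ _ ipV u _) _ yx) => p px.
by rewrite !(ip_sym ipV _ u) !u_c px.
Qed.

Section OrbitCodes.
Local Open Scope classical_set_scope.
Variables (m : nat) (e : 'I_m -> V) (x : V).
Hypotheses (e_on : orthonormal ipV e) (e_basis : forall v, expands ipV e v).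
Local Notation code := 'rV[R]_(m.+1 * m.+1).

Definition orbit_codes : set code := [set v |
  [/\ forall i, 0 <= code_weight v i, \sum_i code_weight v i = 1 &
      forall i, lam (code_point e v i) = lam x]].

Lemma closed_orbit_codes : closed orbit_codes.
Proof.
have -> : orbit_codes = \bigcap_i [set v | 0 <= code_weight v i] `&`
    [set v | \sum_i code_weight v i = 1] `&`
    \bigcap_i [set v | lam (code_point e v i) = lam x].
  rewrite predeqE => v; split=> [[w_ge0 w_sum1 v_orb]|[[w_ge0 w_sum1] v_orb]].
    by split; first split=> //; move=> i _; [apply: w_ge0 | apply: v_orb].
  by split=> // i; [apply: w_ge0 | apply: v_orb].
apply: closedI; first apply: closedI.
- apply: closed_bigI => i _.
  apply: (continuous_closedP _).1 (closed_ge (y := 0)).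
  exact: coord_continuous.
- apply: (continuous_closedP _).1 (closed_eq (y := 1)).
  by apply: (continuous_big add_continuous) => i _; apply: coord_continuous.
- apply: closed_bigI => i _; apply: (@closed_fiber_lipschitz _ _ ipW _ _ _ m%:R) => // a b d ab.
  have -> : m%:R * d ^+ 2 = \sum_(j < m) d ^+ 2 by rewrite sumr_const card_ord mulr_natl.
  apply: le_trans (sqdist_lam_le _ _) _.
  rewrite /sqdist (parseval _ (e_basis _)); apply: ler_sum => j _.
  rewrite ipBl !ip_code_point //.
  by move: (ab (mxvec_index i (lift ord0 j))); rewrite ler_norml => /andP[]; nra.
Qed.

Lemma bounded_orbit_codes : bounded_set orbit_codes.
Proof.
apply: (bounded_set_rV (r := 1 + ipV x x)) => v [w_ge0 w_sum1 v_orb] k.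
have xx_ge0 := ip_ge0 ipV x.
case/mxvec_indexP: k => i j; case: (unliftP ord0 j) => [j' ->|->].
  have : v ord0 (mxvec_index i (lift ord0 j')) ^+ 2 <= ipV x x.
    rewrite -ip_lam_diag -(v_orb i) ip_lam_diag (parseval _ (e_basis _)) (bigD1 j') //=.
    rewrite !ip_code_point // -expr2 lerDl; apply: sumr_ge0 => k _.
    by rewrite -expr2 sqr_ge0.
  have := normr_ge0 (v ord0 (mxvec_index i (lift ord0 j'))).
  by rewrite -real_normK ?num_real //; nra.
have wi_le1 : code_weight v i <= 1.
  by rewrite -w_sum1 (bigD1 i) //= lerDl sumr_ge0.
have := w_ge0 i; rewrite /code_weight in wi_le1 * => wi_ge0.
by rewrite ger0_norm //; lra.
Qed.

Lemma exists_min_orbit_comb y : exists (w : 'I_m.+1 -> R) (p : 'I_m.+1 -> V),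
  [/\ forall i, 0 <= w i, \sum_i w i = 1, forall i, lam (p i) = lam x &
   forall (w' : 'I_m.+1 -> R) (p' : 'I_m.+1 -> V), (forall i, 0 <= w' i) ->
     \sum_i w' i = 1 -> (forall i, lam (p' i) = lam x) ->
     sqdist ipV y (\sum_i w i *: p i) <= sqdist ipV y (\sum_i w' i *: p' i)].
Proof.
have encode_orbit w p : (forall i, 0 <= w i) -> \sum_i w i = 1 ->
    (forall i, lam (p i) = lam x) -> orbit_codes (encode ipV e w p).
  move=> w_ge0 w_sum1 p_orb; split=> [i||i].
  - by rewrite code_weight_encode.
  - by under eq_bigr do rewrite code_weight_encode.
  - by rewrite code_point_encode.
have comb_encode w p : code_comb e (encode ipV e w p) = \sum_i w i *: p i.
  by apply: eq_bigr => i _; rewrite code_weight_encode code_point_encode.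
have codes_neq0 : orbit_codes !=set0.
  exists (encode ipV e (fun i => (i == ord0)%:R) (fun=> x)).
  apply: encode_orbit => [i||//]; first exact: ler0n.
  by rewrite big_ord_recl eqxx big1 ?addr0.
have [c /set_mem [w_ge0 w_sum1 c_orb] c_min] := EVT_min_rV codes_neq0
  (bounded_closed_compact bounded_orbit_codes closed_orbit_codes)
  (continuous_subspaceT (continuous_sqdist_code_comb (y := y) e_on e_basis)).
exists (code_weight c), (code_point e c); split=> // w' p' w'_ge0 w'_sum1 p'_orb.
by rewrite -[in leRHS]comb_encode; apply: c_min; apply: mem_set; apply: encode_orbit.
Qed.

End OrbitCodes.

Lemma exists_nearest_majorized x y : finite_dimensional V ->
  exists z, majorized lam z x /\ forall s, lam s = lam x -> forall t, 0 < t -> t <= 1 ->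
    sqdist ipV y z <= sqdist ipV y (t *: s + (1 - t) *: z).
Proof.
move=> /(orthonormal_basis ipV) [m [e [e_on e_basis]]].
have [w [p [w_ge0 w_sum1 p_orb w_min]]] := exists_min_orbit_comb x e_on e_basis y.
exists (\sum_i w i *: p i); split; first by exists m.+1, w, p.
move=> s s_orb t t_gt0 t_le1.
pose w2 := ocons t (fun i => (1 - t) * w i); pose p2 := ocons s p.
have w2_ge0 i : 0 <= w2 i.
  case: (unliftP ord0 i) => [j ->|->]; rewrite /w2 ?ocons_lift ?ocons0; last exact: ltW.
  by rewrite mulr_ge0 ?subr_ge0.
have w2_sum1 : \sum_i w2 i = 1.
  rewrite big_ord_recl /w2 ocons0; under eq_bigr do rewrite ocons_lift.
  by rewrite -mulr_sumr w_sum1 mulr1 addrC subrK.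
(* [t s + (1 - t) z] combines m+2 points of [x]; Caratheodory brings it back to m+1. *)
have [w' [p' [w'_ge0 w'_sum1 p'_p2 w'p']]] :=
  caratheodory_step (fun i => e_basis (p2 i)) w2_ge0 w2_sum1.
have -> : t *: s + (1 - t) *: \sum_i w i *: p i = \sum_i w' i *: p' i.
  rewrite w'p' [RHS]big_ord_recl /w2 /p2 !ocons0 scaler_sumr.
  by under [in RHS]eq_bigr do rewrite !ocons_lift -scalerA.
apply: w_min => // i; have [k ->] := p'_p2 i.
by case: (unliftP ord0 k) => [j ->|->]; rewrite /p2 ?ocons_lift ?ocons0.
Qed.

Lemma majorized_of_ip_le x y : finite_dimensional V ->
  (forall c, ipV c y <= ipW (lam c) (lam x)) -> majorized lam y x.
Proof.
move=> V_fd y_le; have [z [zx z_near]] := exists_nearest_majorized x y V_fd.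
have [s [s_orb s_max]] :
    exists s, lam s = lam x /\ ipV (y - z) s = ipW (lam (y - z)) (lam s).
  by have [_ [_ lam_max]] := hF; apply: lam_max; exists x.
have yz_le := y_le (y - z); rewrite -s_orb -s_max in yz_le.
have := nearest_ip_le0 (z_near s s_orb); rewrite ipBr => sz_le.
suff : y - z = 0 by move/eqP; rewrite subr_eq0 => /eqP ->.
apply: (@ip_eq0 _ _ ipV); apply/eqP; rewrite eq_le ip_ge0 andbT.
by rewrite ipBr; lra.
Qed.

End FTvN.

Theorem proposition9p2 (R : realType) (V W : lmodType R)
  (ipV : inner_product V) (ipW : inner_product W) (lam : V -> W)
  (D : {linear V -> V}) (Dstar : V -> V) :
  FTvN_system ipV ipW lam ->
  doubly_stochastic lam D ->
  is_adjoint ipV D Dstar ->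
  (forall K : V -> Prop, convex K -> spectral lam K -> forall x, K x -> K (D x)) /\
  (forall u, center ipV ipW lam u -> D u = u /\ Dstar u = u) /\
  (forall e, unit_element ipV ipW lam e -> D e = e /\ Dstar e = e) /\
  (finite_dimensional V -> forall x, majorized lam (Dstar x) x).
Proof.
move=> hF hD adj.
have D_center u : center ipV ipW lam u -> D u = u /\ Dstar u = u.
  move=> u_c; split.
    apply: (conv_sub_convex (@convex_set1 _ _ u) _ (hD u)) => z zu.
    exact: (center_orbit hF u_c zu).
  apply: (@ip_injl _ _ ipV) => z.
  by rewrite adj ip_sym (ip_center_majorized u_c (hD z)) ip_sym.
split; [|split; [|split]].
- by move=> K K_cvx K_sp x Kx; apply: (conv_sub_convex K_cvx (K_sp x Kx) (hD x)).
- exact: D_center.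
- by move=> e [_ e_unit]; apply/D_center/e_unit; exists 1; rewrite scale1r.
- move=> V_fd x; apply: (majorized_of_ip_le hF V_fd) => c.
  by rewrite ip_sym adj ip_sym; apply: (ip_majorized_le hF _ (hD c)).
Qed.
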